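(* Let $V=\{1,\dots,n\}$, let $(\bar\Omega,\mathcal F,\mathbb P)$ be a probability space, and let $\sigma:\{0,1\}^n\times\bar\Omega\to\mathbb R$ be such that for every $\omega\in\bar\Omega$ the set function $X\mapsto\sigma(X,\omega)$ (identifying $X\subseteq V$ with its characteristic vector $x\in\{0,1\}^n$) is nondecreasing and submodular, and for each $x$ the random variable $\sigma(x)=\sigma(x,\cdot)$ is integrable. Let $\mathcal X\subseteq\{0,1\}^n$ and $\alpha\in(0,1]$. Fix $\bar x\in\{0,1\}^n$ with support $\bar X=\{j\in V:\bar x_j=1\}$. Then for every $x\in\mathcal X$ and every $\psi\in\mathbb R$ with $\psi\le \mathrm{CVaR}_\alpha(\sigma(x))$, we have $$\psi\le \mathrm{CVaR}_\alpha(\sigma(\bar x))+\sum_{j\in V\setminus\bar X}\big(\mathrm{CVaR}_1(\sigma(\bar x+\mathbf e_j))-\mathrm{CVaR}_\alpha(\sigma(\bar x))\big)x_j .$$ That is, this inequality is valid for the set $\{(x,\psi): x\in\mathcal X,\ \psi\le\mathrm{CVaR}_\alpha(\sigma(x))\}$.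
   Context: For a random variable $Y$ with finite expectation and $\alpha\in(0,1]$, the conditional value-at-risk is $\mathrm{CVaR}_\alpha(Y)=\max_{\eta\in\mathbb R}\{\eta-\frac1\alpha\mathbb E([\eta-Y]_+)\}$, where $[z]_+=\max(z,0)$; in particular $\mathrm{CVaR}_1(Y)=\mathbb E[Y]$. $\mathbf e_j$ denotes the $j$-th unit vector in $\mathbb R^n$. *)

From HB Require Import structures.
From mathcomp Require Import all_boot all_order all_algebra.
From mathcomp Require Import all_classical all_reals all_analysis.
Set Implicit Arguments. Unset Strict Implicit. Unset Printing Implicit Defensive.
Import Order.TTheory GRing.Theory Num.Theory.
Local Open Scope classical_set_scope.
Local Open Scope ring_scope.

Definition pospart {R : realType} (z : R) : R := Num.max z 0.

(* CVaR_alpha(Y) = max_{eta in R} { eta - (1/alpha) E([eta - Y]_+) },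
   taken as a supremum in the extended reals (it is attained and finite
   for integrable Y), and then converted to a real number with fine. *)
Definition CVaR {d : measure_display} {T : measurableType d} {R : realType}
  (P : probability T R) (alpha : R) (Y : T -> R) : R :=
  fine (ereal_sup [set ((eta%:E - (alpha^-1)%:E *
          \int[P]_w (pospart (eta - Y w))%:E)%E) | eta in [set: R]]).

Definition nondecreasing_setfun {n : nat} {R : realType}
  (f : {set 'I_n} -> R) : Prop :=
  forall A B : {set 'I_n}, A \subset B -> f A <= f B.

Definition submodular_setfun {n : nat} {R : realType}
  (f : {set 'I_n} -> R) : Prop :=
  forall A B : {set 'I_n}, f (A :|: B) + f (A :&: B) <= f A + f B.

(** CVaR_alpha(Y) <= E[Y] <= CVaR_1(Y) for integrable Y.  Let S = x \ Xbar.
    Monotonicity and submodularity of the expectation X |-> E sigma(X) give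
      CVaR_alpha(sigma x) <= E sigma(Xbar u S)
        <= E sigma(Xbar) + sum_{j in S} (E sigma(Xbar + j) - E sigma(Xbar)).
    When S is nonempty the coefficient 1 - |S| of E sigma(Xbar) is nonpositive,
    so E sigma(Xbar) may be replaced by the smaller CVaR_alpha(sigma Xbar), and
    E sigma(Xbar + j) by the larger CVaR_1(sigma(Xbar + j)).  When S is empty,
    x is a subset of Xbar and monotonicity of CVaR_alpha suffices. *)

From HB Require Import structures.
From mathcomp Require Import all_boot all_order all_algebra.
From mathcomp Require Import all_classical all_reals all_analysis.
From mathcomp Require Import lra.
Import Order.TTheory GRing.Theory Num.Theory.
Local Open Scope classical_set_scope.
Local Open Scope ring_scope.

Set Implicit Arguments.
Unset Strict Implicit.
Unset Printing Implicit Defensive.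

Section integrable_real.
Context {d : measure_display} {T : measurableType d} {R : realType}.
Variables (mu : measure T R) (D : set T) (mD : measurable D) (f g : T -> R).
Hypotheses (f_int : mu.-integrable D (EFin \o f)) (g_int : mu.-integrable D (EFin \o g)).

Lemma integrable_EFinD : mu.-integrable D (EFin \o (fun x => f x + g x)).
Proof.
by apply: eq_integrable (integrableD mD f_int g_int) => // x _; rewrite /= EFinD.
Qed.

Lemma integrable_EFinB : mu.-integrable D (EFin \o (fun x => f x - g x)).
Proof.
by apply: eq_integrable (integrableB mD f_int g_int) => // x _; rewrite /= EFinB.
Qed.

End integrable_real.

Section CVaR_properties.
Context {d : measure_display} {T : measurableType d} {R : realType}.
Variable P : probability T R.
Implicit Types (Y Z : T -> R) (a c eta : R).

Local Notation integrable Y := (P.-integrable [set: T] (fun w => (Y w)%:E)).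

Definition cvar_objective a eta Y : R :=
  eta - a^-1 * \int[P]_w pospart (eta - Y w).

Lemma integrable_cst_sub c Y : integrable Y -> integrable (fun w => c - Y w).
Proof.
exact: integrable_EFinB (finite_measure_integrable_cst P c measurableT).
Qed.

Lemma integrable_pospart_sub c Y :
  integrable Y -> integrable (fun w => pospart (c - Y w)).
Proof.
move=> hY; have := integrable_funepos measurableT (integrable_cst_sub c hY).
by apply: eq_integrable => // w _ /=; rewrite funeposE /pospart EFin_max.
Qed.

Lemma Rintegral_cst_sub c Y :
  integrable Y -> \int[P]_w (c - Y w) = c - \int[P]_w Y w.
Proof.
move=> hY; rewrite RintegralB //; last exact: finite_measure_integrable_cst.
rewrite Rintegral_cst //; have /= -> := probability_setT P; by rewrite mulr1.
Qed.

Lemma cvar_objective_le_Rintegral a eta Y : 0 < a -> a <= 1 -> integrable Y ->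
  cvar_objective a eta Y <= \int[P]_w Y w.
Proof.
move=> a_gt0 a_le1 hY; rewrite /cvar_objective.
have le_pos : \int[P]_w (eta - Y w) <= \int[P]_w pospart (eta - Y w).
  apply: le_Rintegral => //; [exact: integrable_cst_sub | exact: integrable_pospart_sub |].
  by move=> w _; rewrite /pospart le_max lexx.
have pos_ge0 : 0 <= \int[P]_w pospart (eta - Y w).
  by apply: Rintegral_ge0 => w _; rewrite /pospart le_max lexx orbT.
have le_scaled : \int[P]_w pospart (eta - Y w) <= a^-1 * \int[P]_w pospart (eta - Y w).
  by rewrite ler_peMl // invr_ge1 // unitfE gt_eqF.
move: le_pos; rewrite Rintegral_cst_sub // => le_pos; lra.
Qed.

Lemma cvar_objective_le a eta Y Z : 0 < a -> integrable Y -> integrable Z ->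
  (forall w, Y w <= Z w) -> cvar_objective a eta Y <= cvar_objective a eta Z.
Proof.
move=> a_gt0 hY hZ YZ; rewrite /cvar_objective lerD2l lerN2 ler_pM2l ?invr_gt0 //.
apply: le_Rintegral => //; [exact: integrable_pospart_sub | exact: integrable_pospart_sub |].
by move=> w _; rewrite /pospart ge_max !le_max lexx orbT andbT lerB.
Qed.

Section fixed_level.
Variable a : R.
Hypotheses (a_gt0 : 0 < a) (a_le1 : a <= 1).

Lemma cvar_objective_has_sup Y : integrable Y ->
  has_sup (range (cvar_objective a ^~ Y)).
Proof.
move=> hY; split; first by exists (cvar_objective a 0 Y), 0.
by exists (\int[P]_w Y w) => _ [eta _ <-]; exact: cvar_objective_le_Rintegral.
Qed.

Lemma CVaR_sup Y : integrable Y -> CVaR P a Y = sup (range (cvar_objective a ^~ Y)).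
Proof.
move=> hY; rewrite /CVaR.
have -> : [set (eta%:E - a^-1%:E * \int[P]_w (pospart (eta - Y w))%:E)%E | eta in [set: R]]
    = EFin @` range (cvar_objective a ^~ Y).
  have objE eta : (eta%:E - a^-1%:E * \int[P]_w (pospart (eta - Y w))%:E)%E
      = (cvar_objective a eta Y)%:E.
    rewrite -(fineK (integrable_fin_num measurableT (integrable_pospart_sub eta hY))).
    by rewrite -EFinM -EFinB.
  apply/seteqP; split => z /=.
    by move=> [eta _ <-]; exists (cvar_objective a eta Y); [exists eta | rewrite objE].
  by move=> [r [eta _ <-] <-]; exists eta => //; rewrite objE.
by case: (cvar_objective_has_sup hY) => ne ub; rewrite ereal_sup_EFin.
Qed.

Lemma CVaR_le_Rintegral Y : integrable Y -> CVaR P a Y <= \int[P]_w Y w.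
Proof.
move=> hY; rewrite CVaR_sup //; apply: ge_sup; first by exists (cvar_objective a 0 Y), 0.
by move=> _ [eta _ <-]; exact: cvar_objective_le_Rintegral.
Qed.

Lemma le_CVaR Y Z : integrable Y -> integrable Z ->
  (forall w, Y w <= Z w) -> CVaR P a Y <= CVaR P a Z.
Proof.
move=> hY hZ YZ; rewrite !CVaR_sup //.
apply: ge_sup; first by exists (cvar_objective a 0 Y), 0.
move=> _ [eta _ <-]; apply: le_trans (cvar_objective_le eta a_gt0 hY hZ YZ) _.
by apply: sup_ubound; [case: (cvar_objective_has_sup hZ) | exists eta].
Qed.

End fixed_level.

(* At level 1 the objective at eta is E[min(eta, Y)], which tends to E[Y]
   by dominated convergence with dominating function |Y|. *)
Lemma Rintegral_le_CVaR1 Y : integrable Y -> \int[P]_w Y w <= CVaR P 1 Y.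
Proof.
move=> hY; rewrite CVaR_sup //.
set g := fun (k : nat) w => k%:R - pospart (k%:R - Y w).
have g_int k : integrable (g k) := integrable_cst_sub _ (integrable_pospart_sub _ hY).
have objE k : cvar_objective 1 k%:R Y = \int[P]_w g k w.
  by rewrite /cvar_objective invr1 mul1r Rintegral_cst_sub //; exact: integrable_pospart_sub.
have g_cvg : (\int[P]_w (g k w)%:E)%E @[k --> \oo] --> (\int[P]_w (Y w)%:E)%E.
  apply: (dominated_cvg measurableT _ _ _ (integrable_abse hY)) => //.
  - by move=> k; exact: measurable_int (g_int k).
  - move=> w _; apply: cvg_near_cst; exists (Num.truncn `|Y w|).+1 => // k /= k_gt.
    have Y_le : Y w <= k%:R.
      apply: le_trans (ler_norm _) _; apply/ltW/(lt_le_trans (truncnS_gt _)).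
      by rewrite ler_nat.
    by rewrite /g /pospart max_l ?subr_ge0 // opprB addrCA subrr addr0.
  - move=> k w _; rewrite /= lee_fin /g /pospart.
    have [Y_le|_] := leP (k%:R - Y w) 0.
      by rewrite subr0 ger0_norm // (le_trans _ (ler_norm _)) //; lra.
    by rewrite opprB addrCA subrr addr0.
rewrite -lee_fin /Rintegral fineK ?(integrable_fin_num measurableT hY) //.
rewrite -(cvg_lim _ g_cvg) //; apply: lime_le.
  by apply/cvg_ex; exists (\int[P]_w (Y w)%:E)%E.
apply: nearW => k; rewrite -(fineK (integrable_fin_num measurableT (g_int k))) lee_fin.
rewrite -[fine _]/(\int[P]_w g k w) -objE.
by apply: sup_ubound; [case: (cvar_objective_has_sup ltr01 (lexx 1) hY) | exists k%:R].
Qed.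

End CVaR_properties.

Section submodular_setfun.
Variables (n : nat) (R : realType) (f : {set 'I_n} -> R).
Hypotheses (f_mono : nondecreasing_setfun f) (f_sub : submodular_setfun f).

Lemma submodular_setfun_setU_le A S :
  f (A :|: S) <= f A + \sum_(j in S) (f (j |: A) - f A).
Proof.
rewrite -big_enum -[in X in f (_ :|: X)](set_enum S) /=.
elim: (enum S) => [|j s IH].
  have -> : A :|: [set x | x \in [::]] = A by apply/setP => i; rewrite !inE orbF.
  by rewrite big_nil addr0.
rewrite big_cons; set B := A :|: [set x | x \in s].
have -> : A :|: [set x | x \in j :: s] = (j |: A) :|: B.
  by apply/setP => i; rewrite !inE; case: (i == j); case: (i \in A).
have le_cap : f A <= f ((j |: A) :&: B).
  by apply: f_mono; rewrite finset.subsetI finset.subsetUr finset.subsetUl.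
have := f_sub (j |: A) B; lra.
Qed.

End submodular_setfun.

Section expectation_setfun.
Context {d : measure_display} {T : measurableType d} {R : realType} {n : nat}.
Variables (P : probability T R) (sigma : {set 'I_n} -> T -> R).
Hypothesis sigma_int : forall X, P.-integrable [set: T] (fun w => (sigma X w)%:E).

Lemma Rintegral_nondecreasing_setfun :
  (forall w, nondecreasing_setfun (sigma ^~ w)) ->
  nondecreasing_setfun (fun X => \int[P]_w sigma X w).
Proof.
move=> mono A B AB.
by apply: le_Rintegral (sigma_int A) (sigma_int B) _ => // w _; exact: mono.
Qed.

Lemma Rintegral_submodular_setfun :
  (forall w, submodular_setfun (sigma ^~ w)) ->
  submodular_setfun (fun X => \int[P]_w sigma X w).
Proof.
move=> sub A B; rewrite -!RintegralD //; [|exact: sigma_int ..].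
apply: le_Rintegral => [|||w _]; [exact: measurableT| | |exact: sub];
  by apply: integrable_EFinD => //; exact: sigma_int.
Qed.

End expectation_setfun.

Lemma add_sum_subr_le (I : finType) (R : numDomainType) (S : {set I}) (j0 : I)
    (a b : I -> R) (c e : R) :
  j0 \in S -> c <= e -> (forall j, a j <= b j) ->
  e + \sum_(j in S) (a j - e) <= c + \sum_(j in S) (b j - c).
Proof.
move=> j0S ce ab; rewrite (bigD1 j0) // [in X in _ <= X](bigD1 j0) //=.
rewrite [e + _]addrA [c + _]addrA !subrKC.
by apply: lerD => //; apply: ler_sum => j _; apply: lerB.
Qed.

Theorem proposition1 (n : nat) (d : measure_display) (T : measurableType d)
  (R : realType) (P : probability T R)
  (sigma : {set 'I_n} -> T -> R)
  (hmono : forall w : T, nondecreasing_setfun (fun X => sigma X w))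
  (hsub : forall w : T, submodular_setfun (fun X => sigma X w))
  (hint : forall X : {set 'I_n}, P.-integrable [set: T] (fun w => (sigma X w)%:E))
  (calX : {set {set 'I_n}}) (alpha : R) (halpha0 : 0 < alpha) (halpha1 : alpha <= 1)
  (Xbar : {set 'I_n}) :
  forall (x : {set 'I_n}) (psi : R), x \in calX ->
    psi <= CVaR P alpha (sigma x) ->
    psi <= CVaR P alpha (sigma Xbar) +
      \sum_(j in ~: Xbar)
        (CVaR P 1 (sigma (j |: Xbar)) - CVaR P alpha (sigma Xbar)) * (j \in x)%:R.
Proof.
move=> x psi _ /le_trans; apply.
set E := fun X => \int[P]_w sigma X w.
pose C j := CVaR P 1 (sigma (j |: Xbar)) - CVaR P alpha (sigma Xbar).
have -> : \sum_(j in ~: Xbar) C j * (j \in x)%:R = \sum_(j in x :\: Xbar) C j.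
  rewrite [RHS]big_mkcond [LHS]big_mkcond; apply: eq_bigr => j _.
  by rewrite !inE; case: (j \in x); case: (j \in Xbar); rewrite ?mulr1 ?mulr0.
have [j0 j0_new|no_new] := pickP (mem (x :\: Xbar)); last first.
  rewrite big_pred0 // addr0; apply: le_CVaR => // w; apply: hmono.
  by apply/fintype.subsetP => i ix; have := no_new i; rewrite !inE ix andbT => /negbFE.
have E_x_le : E x <= E (Xbar :|: (x :\: Xbar)).
  apply: Rintegral_nondecreasing_setfun => //; apply/fintype.subsetP => i ix.
  by rewrite !inE ix andbT orbN.
apply: le_trans (CVaR_le_Rintegral halpha0 halpha1 (hint x)) _.
apply: le_trans E_x_le _.
apply: le_trans (submodular_setfun_setU_le (Rintegral_nondecreasing_setfun hint hmono)
  (Rintegral_submodular_setfun hint hsub) _ _) _.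
apply: (add_sum_subr_le j0_new); first exact: CVaR_le_Rintegral.
by move=> j; exact: Rintegral_le_CVaR1.
Qed.
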